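(* Let $Q=\langle b\rangle\ltimes_{(g,\gamma)}X$ and let $r=r(g,\gamma)$. Then $$N(Q)=\{(b^i,x): x\in\mathrm{Rad}(\gamma)\text{ and either } i=0 \text{ or } r \text{ divides } i\},$$ $$Z(Q)=\{(b^i,x)\in N(Q): |g| \text{ divides } i \text{ and } g(x)=x\}.$$ (Here ''$r$ divides $i$'' is false for $r=\infty$, and ''$|g|$ divides $i$'' means $g^i=\mathrm{id}$.)
   Context: Let $(X,+)$ be an abelian group and $(g,\gamma)$ a construction pair on it: $g$ a permutation of $X$, $\gamma:X\times X\to X$ symmetric, alternating, biadditive, with (C1) $g^{-1}(g(x)+g(y))=x+y+\gamma(x,y)+g^{-1}(\gamma(x,y))+g^{-2}(\gamma(x,y))$, (C2) $\gamma(\gamma(x,y),z)=0$, (C3) $g^{-1}(\gamma(x,y))=\gamma(g(x),y)$ for all $x,y,z$. Let $\mathrm{Rad}(\gamma)=\{x:\gamma(x,y)=0\ \forall y\}$ and $r(g,\gamma)$ the least positive $r$ with $\sum_{0\le k<r}g^k(x)\in\mathrm{Rad}(\gamma)$ for all $x$ ($\infty$ if none). $I(i,j)$ is $\emptyset$ if $i=j$, $\{i,\dots,j-1\}$ if $i<j$, $\{j,\dots,i-1\}$ if $j<i$. For a cyclic group $C=\langle b\rangle$ such that (if finite) $|g|$ and $r(g,\gamma)$ divide $|C|$, $C\ltimes_{(g,\gamma)}X$ is the Moufang loop on $C\times X$ with multiplication $(b^i,x)(b^j,y)=(b^{i+j},g^{-j}(x)+y+\sum_{k\in I(i+j,-j)}g^{-k}(\gamma(x,y)))$.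 The nucleus $N(Q)$ of a loop is the set of $a$ with $a(yz)=(ay)z$, $y(az)=(ya)z$, $y(za)=(yz)a$ for all $y,z$; the center $Z(Q)$ is the set of $a\in N(Q)$ commuting with every element. *)

From mathcomp Require Import all_boot all_order all_algebra.
Set Implicit Arguments. Unset Strict Implicit. Unset Printing Implicit Defensive.
Import Order.TTheory GRing.Theory Num.Theory.
Local Open Scope ring_scope.

Section Defs.
Variable X : zmodType.

Definition gpow (g ginv : X -> X) (k : int) (x : X) : X :=
  match k with
  | Posz m => iter m g x
  | Negz m => iter m.+1 ginv x
  end.

Definition Rad (gamma : X -> X -> X) (x : X) : Prop :=
  forall y, gamma x y = 0.

Definition construction_pair (g ginv : X -> X) (gamma : X -> X -> X) : Prop :=
  cancel g ginv /\ cancel ginv g /\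
  (forall x y, gamma x y = gamma y x) /\
  (forall x, gamma x x = 0) /\
  (forall x y z, gamma (x + y) z = gamma x z + gamma y z) /\
  (forall x y z, gamma x (y + z) = gamma x y + gamma x z) /\
  (forall x y, ginv (g x + g y) =
     x + y + gamma x y + ginv (gamma x y) + ginv (ginv (gamma x y))) /\
  (forall x y z, gamma (gamma x y) z = 0) /\
  (forall x y, ginv (gamma x y) = gamma (g x) y).

Definition r_prop (g ginv : X -> X) (gamma : X -> X -> X) (r : nat) : Prop :=
  forall x, Rad gamma (\sum_(k < r) gpow g ginv k%:Z x).

(* r is r(g,gamma) (the least positive such r); r(g,gamma) = oo iff no such r *)
Definition is_r (g ginv : X -> X) (gamma : X -> X -> X) (r : nat) : Prop :=
  [/\ (0 < r)%N, r_prop g ginv gamma r &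
      forall m, (0 < m)%N -> (m < r)%N -> ~ r_prop g ginv gamma m].

Definition r_divides (g ginv : X -> X) (gamma : X -> X -> X) (i : int) : Prop :=
  exists r, is_r g ginv gamma r /\ (r%:Z %| i)%Z.

(* sum over k in I(i,j) = {min i j, ..., max i j - 1} *)
Definition sumI (i j : int) (F : int -> X) : X :=
  \sum_(t < `|j - i|%N) F (Num.min i j + t%:Z).

(* The cyclic group C = <b> has order n, with n = 0 meaning C infinite.
   b^i is represented by the integer i, normalized to 0 <= i < n when n > 0. *)
Definition normz (n : nat) (i : int) : int :=
  if n == 0%N then i else (i %% n%:Z)%Z.

Definition canon (n : nat) (a : int * X) : Prop := normz n a.1 = a.1.

Definition qmul (g ginv : X -> X) (gamma : X -> X -> X) (n : nat)
  (a b : int * X) : int * X :=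
  let: (i, x) := a in let: (j, y) := b in
  (normz n (i + j),
   gpow g ginv (- j) x + y +
   sumI (i + j) (- j) (fun k => gpow g ginv (- k) (gamma x y))).

Definition in_nucleus (g ginv : X -> X) (gamma : X -> X -> X) (n : nat)
  (a : int * X) : Prop :=
  let m := qmul g ginv gamma n in
  canon n a /\
  forall y z, canon n y -> canon n z ->
    [/\ m a (m y z) = m (m a y) z,
        m y (m a z) = m (m y a) z &
        m y (m z a) = m (m y z) a].

Definition in_center (g ginv : X -> X) (gamma : X -> X -> X) (n : nat)
  (a : int * X) : Prop :=
  in_nucleus g ginv gamma n a /\
  forall y, canon n y -> qmul g ginv gamma n a y = qmul g ginv gamma n y a.

End Defs.

From mathcomp Require Import all_boot all_order all_algebra.
From mathcomp Require Import zify ring.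
From Stdlib Require Import Classical.
Import Order.TTheory GRing.Theory Num.Theory.
Set Implicit Arguments. Unset Strict Implicit. Unset Printing Implicit Defensive.
Local Open Scope ring_scope.

(* The correction term of the multiplication of Q is
     Gsum a b u v := sum_(t in I(a,b)) gamma (g^t u) v = gamma (sum_t g^t u, v),
   and the whole proof is a calculus of these sums.  Since gamma takes values
   of order 2 in Rad(gamma), Gsum is additive in the interval modulo 2
   (Gsum a b + Gsum b c = Gsum a c), it is shift-covariant under g, and the
   failure of g^m to be additive is exactly Gsum (2m) (-m) u v.  An integer L
   is a "period" when every Gsum over an interval of length L vanishes; the
   periods form a subgroup of Z containing every r with the defining property
   of r(g,gamma), and (under the standing hypotheses) the order n of C.

   With these tools, (b^i, x) with x in Rad(gamma) and i a period satisfies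
   the three nuclear associativity laws, by comparing Gsums over intervals
   whose endpoints differ by periods.  Conversely, associativity with
   (b^0,y),(b^0,z) forces Gsum i 0 = 0, i.e. |i| has the defining property of
   r, hence r(g,gamma) | i; associativity with (b^0,y),(b^1,0) forces
   x in Rad(gamma).  The center is then read off from commutation with
   (b^0,y) and (b^1,0). *)

Lemma int_ind_step (P : int -> Prop) :
  P 0 -> (forall m, P m -> P (m + 1)) -> (forall m, P m -> P (m - 1)) ->
  forall m, P m.
Proof.
move=> P0 PS PP; elim/int_rect => [//|k IH|k IH]; first by rewrite -addn1 PoszD; apply: PS.
by rewrite -addn1 PoszD opprD; apply: PP.
Qed.

Lemma least_pos_witness (P : nat -> Prop) m : (0 < m)%N -> P m ->
  exists r, [/\ (0 < r)%N, P r & forall m', (0 < m')%N -> (m' < r)%N -> ~ P m'].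
Proof.
elim/ltn_ind: m => m IH m0 Pm.
case: (classic (exists m', [/\ (0 < m')%N, (m' < m)%N & P m'])) => [[m' [h1 h2 h3]]|Hno].
  exact: (IH m' h2 h1 h3).
by exists m; split => // m' h1 h2 Pm'; apply: Hno; exists m'; split.
Qed.

Lemma addr_cancel_shuffle (X : zmodType) (x y z a b c : X) :
  x + (y + z) + (a + b) = x + y + a + z + (b + c) -> c = 0.
Proof.
have -> : x + (y + z) + (a + b) = x + y + a + z + b.
  by rewrite !addrA; congr (_ + _); rewrite -[LHS]addrA (addrC z) addrA.
by rewrite addrA -{1}(addr0 (x + y + a + z + b)) => /addrI.
Qed.

Lemma rearr_sum (X : zmodType) (a b x p1 p2 : X) : a + (b + x) + (p1 + p2) = a + b + p1 + p2 + x.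
Proof. by rewrite -!addrA; congr (_ + (_ + _)); rewrite addrC -addrA. Qed.

Lemma addr_cancel_tail (X : zmodType) (w a c : X) : w + a = w + (a + c) -> c = 0.
Proof. by rewrite -{1}(addr0 a) => /addrI /addrI. Qed.

Section CyclicIndex.
Variable n : nat.

Lemma normz_ex i : exists t, normz n i = i + t * n%:Z.
Proof.
rewrite /normz; case: eqP => [_|_]; first by exists 0; rewrite mul0r addr0.
by exists (- (i %/ n%:Z)%Z); rewrite {2}(divz_eq i n%:Z); ring.
Qed.

Lemma normzD a t : normz n (a + t * n%:Z) = normz n a.
Proof.
rewrite /normz; case: eqP => [->|_]; first by rewrite mulr0 addr0.
by rewrite addrC modzMDl.
Qed.

Lemma normz0 : normz n 0 = 0.
Proof. by rewrite /normz; case: eqP => // _; rewrite mod0z. Qed.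

Lemma normz1 : n <> 1%N -> normz n 1 = 1.
Proof.
move=> n1; rewrite /normz; case: eqP => // /eqP n0; rewrite modz_small //.
by apply/andP; split => //; rewrite ltz_nat; lia.
Qed.

Lemma normz_assoc a b c s1 s2 :
  normz n (a + (b + c + s1 * n%:Z)) = normz n (a + b + s2 * n%:Z + c).
Proof.
rewrite (_ : a + (b + c + s1 * n%:Z) = (a + b + c) + s1 * n%:Z); last by ring.
by rewrite (_ : a + b + s2 * n%:Z + c = (a + b + c) + s2 * n%:Z) ?normzD //; ring.
Qed.

End CyclicIndex.

Section PermutationPowers.
Variables (X : zmodType) (g ginv : X -> X).
Hypotheses (gK : cancel g ginv) (gVK : cancel ginv g).
Local Notation G := (gpow g ginv).

Lemma gpowS m x : G (m + 1) x = g (G m x).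
Proof.
case: m => [k|k]; first by rewrite -PoszD addn1.
case: k => [|k]; first by rewrite /= gVK.
have -> : Negz k.+1 + 1 = Negz k by rewrite !NegzE; lia.
by rewrite /= gVK.
Qed.

Lemma gpowP m x : G (m - 1) x = ginv (G m x).
Proof. by rewrite -{2}(subrK 1 m) gpowS gK. Qed.

Lemma gpowD a b x : G (a + b) x = G a (G b x).
Proof.
elim/int_ind_step: a => [|a IH|a IH]; first by rewrite add0r.
  by rewrite -addrA (addrC 1) addrA gpowS IH -gpowS.
by rewrite -addrA (addrC (-1)) addrA gpowP IH -gpowP.
Qed.

Lemma gpowNK m x : G (- m) (G m x) = x.
Proof. by rewrite -gpowD addNr. Qed.

Lemma gpowKN m x : G m (G (- m) x) = x.
Proof. by rewrite -gpowD addrN. Qed.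

Lemma gpow_fix m x : g x = x -> G m x = x.
Proof.
move=> Hx; elim/int_ind_step: m => [//|m IH|m IH]; first by rewrite gpowS IH.
by rewrite gpowP IH -{1}Hx gK.
Qed.

Lemma gpow_period n a t x : (forall y, G n%:Z y = y) -> G (a + t * n%:Z) x = G a x.
Proof.
move=> Gn; rewrite gpowD; congr (G a _).
elim/int_ind_step: t => [//|t IH|t IH]; first by rewrite mulrDl mul1r gpowD Gn.
by rewrite mulrBl mul1r gpowD -{1}(Gn x) gpowNK.
Qed.

End PermutationPowers.

Section ConstructionPair.
Variables (X : zmodType) (g ginv : X -> X) (gamma : X -> X -> X).
Hypothesis HC : construction_pair g ginv gamma.

Local Notation G := (gpow g ginv).
Local Notation Rd := (Rad gamma).

Lemma gK : cancel g ginv. Proof. by case: HC. Qed.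
Lemma gVK : cancel ginv g. Proof. by case: HC => _ []. Qed.
Lemma gammaC x y : gamma x y = gamma y x. Proof. by case: HC => _ [] _ []. Qed.
Lemma gamma_diag x : gamma x x = 0. Proof. by case: HC => _ [] _ [] _ []. Qed.
Lemma gammaDl x y z : gamma (x + y) z = gamma x z + gamma y z.
Proof. by case: HC => _ [] _ [] _ [] _ []. Qed.
Lemma gammaDr x y z : gamma x (y + z) = gamma x y + gamma x z.
Proof. by case: HC => _ [] _ [] _ [] _ [] _ []. Qed.
Lemma pairC1 x y : ginv (g x + g y) =
     x + y + gamma x y + ginv (gamma x y) + ginv (ginv (gamma x y)).
Proof. by case: HC => _ [] _ [] _ [] _ [] _ [] _ [] H _; apply: H. Qed.
Lemma pairC2 x y z : gamma (gamma x y) z = 0.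
Proof. by case: HC => _ [] _ [] _ [] _ [] _ [] _ [] _ [] H _; apply: H. Qed.
Lemma pairC3 x y : ginv (gamma x y) = gamma (g x) y.
Proof. by case: HC => _ [] _ [] _ [] _ [] _ [] _ [] _ [] _ H; apply: H. Qed.

Local Notation gpowS := (gpowS gVK).
Local Notation gpowP := (gpowP gK gVK).
Local Notation gpowD := (gpowD gK gVK).
Local Notation gpowNK := (gpowNK gK gVK).
Local Notation gpowKN := (gpowKN gK gVK).
Local Notation gpow_fix := (gpow_fix gK gVK).

Lemma gamma0l y : gamma 0 y = 0.
Proof. by apply/(addrI (gamma 0 y)); rewrite -gammaDl !addr0. Qed.
Lemma gamma0r y : gamma y 0 = 0. Proof. by rewrite gammaC gamma0l. Qed.
Lemma gammaNl x y : gamma (- x) y = - gamma x y.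
Proof. by apply/(addrI (gamma x y)); rewrite -gammaDl !subrr gamma0l. Qed.
Lemma gamma_double x y : gamma x y + gamma x y = 0.
Proof.
have := gamma_diag (x + y).
by rewrite gammaDl !gammaDr !gamma_diag add0r addr0 (gammaC y x).
Qed.

Lemma ginv0 : ginv 0 = 0. Proof. by have := pairC3 0 0; rewrite !gamma0r. Qed.
Lemma g0 : g 0 = 0. Proof. by rewrite -{1}ginv0 gVK. Qed.

(* (C3) read backwards: g moves across gamma as ginv. *)
Lemma g_gamma x y : g (gamma x y) = gamma (ginv x) y.
Proof. by rewrite -[in LHS](gVK x) -pairC3 gVK. Qed.

Lemma Rad_gamma x y : Rd (gamma x y). Proof. by move=> z; exact: pairC2. Qed.
Lemma Rad0 : Rd 0. Proof. by move=> z; exact: gamma0l. Qed.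
Lemma RadD a b : Rd a -> Rd b -> Rd (a + b).
Proof. by move=> Ha Hb z; rewrite gammaDl Ha Hb addr0. Qed.
Lemma RadN a : Rd a -> Rd (- a).
Proof. by move=> Ha z; rewrite gammaNl Ha oppr0. Qed.
Lemma Rad_sum m (F : 'I_m -> X) : (forall i, Rd (F i)) -> Rd (\sum_(i < m) F i).
Proof. by move=> HF; elim/big_rec: _ => [|i x _ Hx]; [exact: Rad0 | exact: RadD]. Qed.
Lemma Rad_g a : Rd a -> Rd (g a).
Proof. by move=> Ha z; rewrite -pairC3 Ha ginv0. Qed.
Lemma Rad_ginv a : Rd a -> Rd (ginv a).
Proof. by move=> Ha z; rewrite -g_gamma Ha g0. Qed.
Lemma Rad_gammar a z : Rd a -> gamma z a = 0. Proof. by move=> Ha; rewrite gammaC Ha. Qed.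

(* By (C1), g and ginv are additive as soon as one summand lies in Rad. *)
Lemma g_addRad a d : Rd d -> g (a + d) = g a + g d.
Proof.
move=> Hd; apply: (can_inj gVK).
by rewrite pairC1 gK (Rad_gammar _ Hd) ginv0 ginv0 !addr0.
Qed.
Lemma ginv_addRad a d : Rd d -> ginv (a + d) = ginv a + ginv d.
Proof.
move=> Hd; rewrite -{1}(gVK a) -{1}(gVK d) pairC1.
by rewrite (Rad_gammar _ (Rad_ginv Hd)) ginv0 ginv0 !addr0.
Qed.

(* Iterating (C3): powers of g move across gamma with opposite exponent. *)
Lemma gpow_gamma k u v : G (- k) (gamma u v) = gamma (G k u) v.
Proof.
elim/int_ind_step: k => [//|k IH|k IH].
  by rewrite opprD gpowP IH pairC3 -gpowS.
by rewrite opprB addrC gpowS IH g_gamma -gpowP.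
Qed.
Lemma gamma_gpow_swap s x y : gamma x (G s y) = gamma (G s x) y.
Proof. by rewrite gammaC -gpow_gamma gammaC gpow_gamma. Qed.

Lemma Rad_gpow m a : Rd a -> Rd (G m a).
Proof.
move=> Ha; elim/int_ind_step: m => [//|m IH|m IH].
  by rewrite gpowS; apply: Rad_g.
by rewrite gpowP; apply: Rad_ginv.
Qed.
Lemma Rad_gpowE m a : Rd (G m a) -> Rd a.
Proof. by move=> H; rewrite -(gpowNK m a); apply: Rad_gpow. Qed.

Lemma gpow_addRad m a d : Rd d -> G m (a + d) = G m a + G m d.
Proof.
move=> Hd; elim/int_ind_step: m => [//|m IH|m IH].
  by rewrite !gpowS IH g_addRad //; apply: Rad_gpow.
by rewrite !gpowP IH ginv_addRad //; apply: Rad_gpow.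
Qed.
Lemma gpow_addRadl m a d : Rd d -> G m (d + a) = G m d + G m a.
Proof. by move=> Hd; rewrite addrC gpow_addRad // addrC. Qed.

Definition Gsum (a b : int) (u v : X) : X := sumI a b (fun t => gamma (G t u) v).

Lemma Gsum_aa a u v : Gsum a a u v = 0.
Proof. by rewrite /Gsum /sumI subrr big_ord0. Qed.

(* Extending the interval by one step at its right end (modulo 2). *)
Lemma Gsum_step a b u v : Gsum a (b + 1) u v = Gsum a b u v + gamma (G b u) v.
Proof.
rewrite /Gsum /sumI.
have [[m ->]|[m ->]] : (exists m : nat, b = a + Posz m) \/
                       (exists m : nat, b = a - (Posz m.+1)).
  by case E: (b - a) => [m|m]; [left; exists m | right; exists m];
     move: E; rewrite ?NegzE; lia.
  have -> : absz (a + Posz m + 1 - a)%R = m.+1 by lia.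
  have -> : absz (a + Posz m - a)%R = m by lia.
  by rewrite !min_l ?big_ord_recr //=; lia.
have -> : absz (a - Posz m.+1 + 1 - a)%R = m by lia.
have -> : absz (a - Posz m.+1 - a)%R = m.+1 by lia.
rewrite !min_r; [|lia|lia].
rewrite big_ord_recl /= addr0 [RHS]addrC addrA gamma_double add0r.
by apply: eq_bigr => i _; congr (gamma (G _ u) v); rewrite /bump /=; lia.
Qed.

Lemma Gsum_chain a b c u v : Gsum a b u v + Gsum b c u v = Gsum a c u v.
Proof.
rewrite -(addrNK b c) (addrC (c - b)); move: (c - b) => d.
elim/int_ind_step: d => [|d IH|d IH]; first by rewrite addr0 Gsum_aa addr0.
  by rewrite addrA !Gsum_step addrA IH.
have E1 := Gsum_step a (b + d - 1) u v; have E2 := Gsum_step b (b + d - 1) u v.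
rewrite subrK in E1 E2.
rewrite !addrA; apply/(addIr (gamma (G (b + d - 1) u) v)).
by rewrite -[LHS]addrA -E2 IH -E1.
Qed.

Lemma Gsum_chainE a b b' c u v : b = b' -> Gsum a b u v + Gsum b' c u v = Gsum a c u v.
Proof. by move=> ->; apply: Gsum_chain. Qed.

Lemma Gsum_congr a b a' b' u v : a = a' -> b = b' -> Gsum a b u v = Gsum a' b' u v.
Proof. by move=> -> ->. Qed.

Lemma Gsum_swap a b u v : Gsum a b u v = Gsum b a u v.
Proof. by rewrite /Gsum /sumI minC -opprB abszN. Qed.

Lemma Gsum_shiftl a b s u v : Gsum a b (G s u) v = Gsum (a + s) (b + s) u v.
Proof.
rewrite /Gsum /sumI (_ : b + s - (a + s) = b - a); last by ring.
rewrite -addr_minl; apply: eq_bigr => i _.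
by rewrite -gpowD; congr (gamma (G _ u) v); ring.
Qed.

Lemma Gsum_shiftr a b s u v : Gsum a b u (G s v) = Gsum (a + s) (b + s) u v.
Proof.
rewrite /Gsum /sumI (_ : b + s - (a + s) = b - a); last by ring.
rewrite -addr_minl; apply: eq_bigr => i _.
by rewrite gamma_gpow_swap -gpowD; congr (gamma (G _ u) v); ring.
Qed.

Lemma Gsum_symm a b u v : Gsum a b u v = Gsum a b v u.
Proof. by apply: eq_bigr => i _; rewrite -gamma_gpow_swap gammaC. Qed.

Lemma Gsum_Dr a b u v w : Gsum a b u (v + w) = Gsum a b u v + Gsum a b u w.
Proof. by rewrite /Gsum /sumI -big_split; apply: eq_bigr => i _; rewrite gammaDr. Qed.
Lemma Gsum_Dl a b u v w : Gsum a b (v + w) u = Gsum a b v u + Gsum a b w u.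
Proof. by rewrite !(Gsum_symm a b _ u) Gsum_Dr. Qed.

Lemma Gsum_Radr a b u v : Rd v -> Gsum a b u v = 0.
Proof. by move=> Hv; rewrite /Gsum /sumI big1 // => i _; rewrite Rad_gammar. Qed.
Lemma Gsum_Radl a b u v : Rd u -> Gsum a b u v = 0.
Proof. by move=> Hu; rewrite Gsum_symm Gsum_Radr. Qed.

Lemma Rad_Gsum a b u v : Rd (Gsum a b u v).
Proof. by apply: Rad_sum => i; apply: Rad_gamma. Qed.

Lemma Gsum_gamma a b u v : Gsum a b u v = gamma (sumI a b (fun t => G t u)) v.
Proof.
by rewrite /Gsum /sumI (big_morph (gamma^~ v) (fun x y => gammaDl x y v) (gamma0l v)).
Qed.

Lemma Gsum_double a b u v : Gsum a b u v + Gsum a b u v = 0.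
Proof. by rewrite Gsum_gamma gamma_double. Qed.

Lemma g_Gsum a b u v : g (Gsum a b u v) = Gsum (a - 1) (b - 1) u v.
Proof.
by rewrite Gsum_gamma g_gamma -[ginv _]/(G (-1) _) -gamma_gpow_swap -Gsum_gamma Gsum_shiftr.
Qed.
Lemma ginv_Gsum a b u v : ginv (Gsum a b u v) = Gsum (a + 1) (b + 1) u v.
Proof.
by rewrite Gsum_gamma pairC3 -[g _]/(G 1 _) -gamma_gpow_swap -Gsum_gamma Gsum_shiftr.
Qed.

Lemma gpow_Gsum s a b u v : G s (Gsum a b u v) = Gsum (a - s) (b - s) u v.
Proof.
elim/int_ind_step: s => [|s IH|s IH]; first by rewrite !subr0.
  by rewrite gpowS IH g_Gsum !opprD !addrA.
by rewrite gpowP IH ginv_Gsum; apply: Gsum_congr; ring.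
Qed.

Lemma Gsum03 u v : Gsum 0 3 u v = gamma u v + gamma (g u) v + gamma (g (g u)) v.
Proof. by rewrite (_ : 3 = 0 + 1 + 1 + 1) // !Gsum_step Gsum_aa add0r !gpowS. Qed.

(* (C1) rewritten: the defect of additivity of g and of ginv. *)
Lemma g_add u v : g (u + v) = g u + g v + Gsum 2 (-1) u v.
Proof.
have H' : ginv (g u + g v) = (u + v) + Gsum 0 3 u v.
  by rewrite pairC1 Gsum03 -!pairC3 !addrA.
have -> : g u + g v = g (u + v) + g (Gsum 0 3 u v).
  by rewrite -[RHS]g_addRad; [rewrite -H' gVK | exact: Rad_Gsum].
by rewrite -addrA g_Gsum (Gsum_swap 2) Gsum_double addr0.
Qed.

Lemma ginv_add u v : ginv (u + v) = ginv u + ginv v + Gsum (-2) 1 u v.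
Proof.
have H := pairC1 (ginv u) (ginv v); rewrite !gVK in H.
rewrite H -!addrA; congr (_ + (_ + _)).
rewrite (_ : Gsum (-2) 1 u v = Gsum (0 + -2) (3 + -2) u v) //.
rewrite -Gsum_shiftl Gsum03 -!pairC3.
rewrite (_ : G (-2) u = ginv (ginv u)) -?gpowD //.
by rewrite -[ginv v]/(G (-1) v) gamma_gpow_swap !addrA.
Qed.

Lemma gpow_add m u v : G m (u + v) = G m u + G m v + Gsum (2 * m) (- m) u v.
Proof.
elim/int_ind_step: m => [|m IH|m IH].
  by rewrite mulr0 oppr0 Gsum_aa addr0.
  rewrite gpowS IH (g_addRad _ (Rad_Gsum _ _ _ _)) g_add g_Gsum.
  rewrite Gsum_shiftl Gsum_shiftr -!gpowS -addrA; congr (_ + _).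
  rewrite (Gsum_swap (2 + m + m)) addrC (Gsum_swap (2 * m - 1)).
  rewrite (@Gsum_chainE _ (2 * m - 1) (-1 + m + m)); last by ring.
  by rewrite Gsum_swap; apply: Gsum_congr; ring.
rewrite gpowP IH (ginv_addRad _ (Rad_Gsum _ _ _ _)) ginv_add ginv_Gsum.
rewrite Gsum_shiftl Gsum_shiftr -!gpowP -addrA; congr (_ + _).
rewrite (@Gsum_chainE _ (1 + m + m) (2 * m + 1)); last by ring.
by apply: Gsum_congr; ring.
Qed.

Definition period (L : int) : Prop := forall a u v, Gsum a (a + L) u v = 0.

Lemma period0 : period 0. Proof. by move=> a u v; rewrite addr0 Gsum_aa. Qed.

Lemma periodD L1 L2 : period L1 -> period L2 -> period (L1 + L2).
Proof.
by move=> H1 H2 a u v; rewrite -(Gsum_chain a (a + L1)) H1 add0r addrA; exact: H2.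
Qed.

Lemma periodN L : period L -> period (- L).
Proof. by move=> H a u v; rewrite Gsum_swap; have := H (a - L) u v; rewrite subrK. Qed.

Lemma periodM L t : period L -> period (t * L).
Proof.
move=> H; elim/int_ind_step: t => [|t IH|t IH]; first by rewrite mul0r; apply: period0.
  by rewrite mulrDl mul1r; apply: periodD.
by rewrite mulrBl mul1r; apply: periodD => //; apply: periodN.
Qed.

Lemma Gsum_period a b a' b' u v :
  period (a' - a) -> period (b' - b) -> Gsum a b u v = Gsum a' b' u v.
Proof.
move=> Ha Hb.
have E1 : Gsum a a' u v = 0 by have := Ha a u v; rewrite addrC subrK.
have E2 : Gsum b' b u v = 0 by have := periodN Hb b' u v; rewrite opprB addrC subrK.
by rewrite -(Gsum_chain a a') E1 add0r -(Gsum_chain a' b') E2 addr0.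
Qed.

Lemma r_prop_period r : r_prop g ginv gamma r -> period r%:Z.
Proof.
move=> Hr a u v; rewrite Gsum_gamma /sumI addrC addKr min_l ?lerDl //.
have -> : \sum_(t < r) G (a + t) u = \sum_(k < r) G k (G a u).
  by apply: eq_bigr => t _; rewrite -gpowD addrC.
exact: Hr.
Qed.

Lemma Gsum_r_prop i : (forall y z, Gsum i 0 y z = 0) -> r_prop g ginv gamma (absz i).
Proof.
move=> H x y; have := H (G (- Num.min i 0) x) y.
rewrite Gsum_gamma /sumI sub0r abszN.
by under eq_bigr => t _ do rewrite -gpowD addrAC subrr add0r.
Qed.

Lemma r_prop_sub a b : r_prop g ginv gamma a -> r_prop g ginv gamma b -> (a <= b)%N ->
  r_prop g ginv gamma (b - a).
Proof.
move=> Ha Hb ab x; rewrite -(gpowKN a%:Z x); move: (G (- a%:Z) x) => {}x.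
have E : \sum_(k < b) G k%:Z x =
         \sum_(k < a) G k%:Z x + \sum_(k < b - a) G k%:Z (G a%:Z x).
  rewrite -!(big_mkord xpredT (fun k : nat => G k%:Z _)) (@big_cat_nat _ _ _ a 0 b) //.
  congr (_ + _); rewrite -{1}(add0n a) big_addn.
  by apply: eq_bigr => k _; rewrite PoszD gpowD.
have -> : \sum_(k < b - a) G k%:Z (G a%:Z x) =
          \sum_(k < b) G k%:Z x - \sum_(k < a) G k%:Z x by rewrite E addrC addKr.
by apply: RadD; [exact: Hb | apply: RadN; exact: Ha].
Qed.

Lemma r_prop_mod r b : r_prop g ginv gamma r -> r_prop g ginv gamma b ->
  r_prop g ginv gamma (b %% r).
Proof.
move=> Hr Hb.
have H q : (q * r <= b)%N -> r_prop g ginv gamma (b - q * r).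
  elim: q => [|q IH] h; first by rewrite mul0n subn0.
  have h' : (q * r <= b)%N by apply: leq_trans h; rewrite leq_mul2r leqnSn orbT.
  rewrite mulSn addnC subnDA; apply: r_prop_sub => //; first exact: IH.
  by rewrite leq_subRL // addnC -mulSn.
have -> : (b %% r = b - b %/ r * r)%N by rewrite {2}(divn_eq b r) addKn.
by apply: H; rewrite leq_divM.
Qed.

Lemma r_divides_of i : i != 0 -> r_prop g ginv gamma (absz i) -> r_divides g ginv gamma i.
Proof.
move=> i0 Hi; have i0' : (0 < absz i)%N by rewrite absz_gt0.
have [r [r0 Hr Hmin]] := least_pos_witness i0' Hi.
exists r; split; first by split.
rewrite dvdzE /=; apply/negPn/negP => Hndiv.
by apply: (Hmin _ _ _ (r_prop_mod Hr Hi)); rewrite ?lt0n // ltn_pmod.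
Qed.

Lemma qmulE n i x j y : qmul g ginv gamma n (i, x) (j, y) =
  (normz n (i + j), G (- j) x + y + Gsum (i + j) (- j) x y).
Proof.
rewrite /qmul /Gsum /sumI; congr (_, _ + _); apply: eq_bigr => t _.
exact: gpow_gamma.
Qed.

(* The cyclic group C has order n (n = 0: infinite); when C is finite the
   construction requires g^n = id and r(g,gamma) | n. *)
Section CyclicOfOrderN.
Variable n : nat.
Hypothesis Hn : (0 < n)%N ->
     (forall x, G n%:Z x = x) /\ (exists r, is_r g ginv gamma r /\ (r %| n)%N).
Local Notation M := (qmul g ginv gamma n).

Lemma gpow_mod a t x : G (a + t * n%:Z) x = G a x.
Proof.
case: (posnP n) => [->|n0]; first by rewrite mulr0 addr0.
by rewrite (gpow_period gK gVK) //; apply: (proj1 (Hn n0)).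
Qed.

Lemma period_n t : period (t * n%:Z).
Proof.
case: (posnP n) => [->|n0]; first by rewrite mulr0; apply: period0.
have [_ [r [[_ Hr _] Hrn]]] := Hn n0.
apply: periodM; rewrite -(divnK Hrn) PoszM; apply: periodM; exact: r_prop_period.
Qed.

Lemma period_comb i c t L : period i -> L = c * i + t * n%:Z -> period L.
Proof. by move=> Vi ->; apply: periodD; [apply: periodM | apply: period_n]. Qed.

Lemma assoc_left i x j y k z : Rd x -> period i ->
  M (i, x) (M (j, y) (k, z)) = M (M (i, x) (j, y)) (k, z).
Proof.
move=> Hx Vi; have [s1 E1] := normz_ex n (j + k); have [s2 E2] := normz_ex n (i + j).
rewrite !qmulE E1 E2; congr (_, _); first exact: normz_assoc.
rewrite !(Gsum_Radl _ _ _ Hx) !addr0.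
rewrite (gpow_addRadl _ _ (Rad_gpow _ Hx)) Gsum_Dl (Gsum_Radl _ _ _ (Rad_gpow _ Hx)).
rewrite add0r -gpowD (_ : - (j + k + s1 * n%:Z) = - (j + k) + (- s1) * n%:Z); last by ring.
rewrite gpow_mod (_ : - k + - j = - (j + k)); last by ring.
rewrite (@Gsum_period (i + j + s2 * n%:Z + k) (- k) (j + k) (- k)) ?addrA //.
- by apply: (period_comb (c := -1) (t := - s2) Vi); ring.
- by apply: (period_comb (c := 0) (t := 0) Vi); ring.
Qed.

Lemma assoc_middle i x j y k z : Rd x -> period i ->
  M (j, y) (M (i, x) (k, z)) = M (M (j, y) (i, x)) (k, z).
Proof.
move=> Hx Vi; have [s1 E1] := normz_ex n (i + k); have [s2 E2] := normz_ex n (j + i).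
rewrite !qmulE E1 E2; congr (_, _); first exact: normz_assoc.
rewrite !(Gsum_Radl _ _ _ Hx) !(Gsum_Radr _ _ _ Hx) !addr0.
rewrite Gsum_Dr (Gsum_Radr _ _ _ (Rad_gpow _ Hx)) add0r.
rewrite (gpow_addRad _ _ Hx) -gpowD Gsum_Dl (Gsum_Radl _ _ _ Hx) addr0 Gsum_shiftl.
rewrite (_ : - (i + k + s1 * n%:Z) = (- k + - i) + (- s1) * n%:Z); last by ring.
rewrite gpow_mod.
rewrite (@Gsum_period (j + (i + k + s1 * n%:Z)) (- k + - i + - s1 * n%:Z)
                      (j + i + s2 * n%:Z + k + - i) (- k + - i)) ?addrA //.
- by apply: (period_comb (c := -1) (t := s2 - s1) Vi); ring.
- by apply: (period_comb (c := 0) (t := s1) Vi); ring.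
Qed.

Lemma assoc_right i x j y k z : Rd x -> period i ->
  M (j, y) (M (k, z) (i, x)) = M (M (j, y) (k, z)) (i, x).
Proof.
move=> Hx Vi; have [s1 E1] := normz_ex n (k + i); have [s2 E2] := normz_ex n (j + k).
rewrite !qmulE E1 E2; congr (_, _); first exact: normz_assoc.
rewrite !(Gsum_Radr _ _ _ Hx) !addr0.
rewrite Gsum_Dr (Gsum_Radr _ _ _ Hx) addr0 Gsum_shiftr.
rewrite (gpow_addRad _ _ (Rad_Gsum _ _ _ _)) gpow_add -gpowD Gsum_shiftl gpow_Gsum.
rewrite (_ : - (k + i + s1 * n%:Z) = (- i + - k) + (- s1) * n%:Z); last by ring.
rewrite gpow_mod.
have Hsum : Gsum (2 * - i - k) (- - i - k) y z + Gsum (j + k - - i) (- k - - i) y z =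
            Gsum (j + (k + i + s1 * n%:Z) - i) (- i - k + - s1 * n%:Z - i) y z.
  rewrite (Gsum_swap (j + k - - i)) (@Gsum_chainE _ (- - i - k) (- k - - i)); last by ring.
  rewrite Gsum_swap; apply: Gsum_period.
  - by apply: (period_comb (c := -1) (t := s1) Vi); ring.
  - by apply: (period_comb (c := 0) (t := - s1) Vi); ring.
by rewrite -Hsum rearr_sum.
Qed.

Lemma nucleus_Gsum i x : normz n i = i ->
  (forall y z, M (i, x) (M (0, y) (0, z)) = M (M (i, x) (0, y)) (0, z)) ->
  forall y z, Gsum i 0 y z = 0.
Proof.
move=> Ci H y z; have := f_equal snd (H y z).
rewrite (qmulE n 0 y 0 z) (qmulE n i x 0 y) !qmulE /=.
rewrite !addr0 !oppr0 (normz0 n) Ci Gsum_aa !addr0.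
rewrite Gsum_Dr !Gsum_Dl (Gsum_Radl _ _ _ (Rad_Gsum _ _ _ _)) addr0.
exact: addr_cancel_shuffle.
Qed.

Lemma nucleus_Rad i x : normz n i = i -> n <> 1%N ->
  (forall y, M (i, x) (M (0, y) (1, 0)) = M (M (i, x) (0, y)) (1, 0)) ->
  Rd x.
Proof.
move=> Ci n1 H; apply: (@Rad_gpowE i) => y.
have := f_equal snd (H y).
rewrite (qmulE n 0 y 1 0) (qmulE n i x 0 y) !qmulE /=.
rewrite !addr0 !add0r oppr0 (normz1 n1) // Ci !(Gsum_Radr _ _ _ Rad0) !addr0.
rewrite -[ginv y]/(G (-1) y) -[ginv (_ + _)]/(G (-1) _) Gsum_shiftr.
rewrite (gpow_addRad _ _ (Rad_Gsum _ _ _ _)) gpow_add gpow_Gsum.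
have Hsum : Gsum (2 * -1) (- -1) x y + Gsum (i - -1) (0 - -1) x y =
          Gsum (i + 1 + -1) (-1 + -1) x y + gamma (G i x) y.
  rewrite (Gsum_swap (i - -1)) (@Gsum_chainE _ (- -1) (0 - -1)); last by ring.
  rewrite (@Gsum_congr _ _ (2 * -1) (i + 1)) // Gsum_step Gsum_swap.
  by congr (_ + _); apply: Gsum_congr; ring.
by rewrite -[in RHS]addrA Hsum; apply: addr_cancel_tail.
Qed.

(* For n = 1 we have r(g,gamma) = 1, so Rad(gamma) is everything. *)
Lemma Rad_order1 x : n = 1%N -> Rd x.
Proof.
move=> n1; have [_ [r [[r0 Hr _] Hrn]]] := Hn (ltac:(by rewrite n1)).
by move: Hrn; rewrite n1 dvdn1 => /eqP r1; have := Hr x; rewrite r1 big_ord1.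
Qed.

Lemma nucleusP i x : normz n i = i ->
  in_nucleus g ginv gamma n (i, x) <-> Rd x /\ (i = 0 \/ r_divides g ginv gamma i).
Proof.
move=> Ci; split.
  move=> [_ Hall]; split.
    case: (eqVneq n 1%N) => [n1|/eqP n1]; first exact: Rad_order1.
    apply: (nucleus_Rad Ci n1) => y.
    by case: (Hall (0, y) (1, 0) (normz0 n) (normz1 n1)).
  case: (eqVneq i 0) => [->|i0]; [by left | right].
  apply: (r_divides_of i0); apply: Gsum_r_prop; apply: (@nucleus_Gsum _ x Ci) => y z.
  by case: (Hall (0, y) (0, z) (normz0 n) (normz0 n)).
move=> [Hx Hi].
have Vi : period i.
  case: Hi => [->|[r [[_ Hr _] Hd]]]; first exact: period0.
  by rewrite -(divzK Hd); apply: periodM; exact: r_prop_period.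
split=> // -[j y] [k z] _ _.
by split; [exact: assoc_left | exact: assoc_middle | exact: assoc_right].
Qed.

(* Description of the center: commuting with (b^0,y) gives g^i = id,
   commuting with (b^1,0) gives g x = x. *)
Lemma centerP i x : normz n i = i ->
  in_center g ginv gamma n (i, x) <->
  [/\ in_nucleus g ginv gamma n (i, x), (forall y, G i y = y) & g x = x].
Proof.
move=> Ci; split.
  move=> [Hnuc Hcomm]; have [Hx _] := (nucleusP x Ci).1 Hnuc.
  split=> // [y|].
    have := f_equal snd (Hcomm (0, y) (normz0 n)); rewrite !qmulE /=.
    rewrite (Gsum_Radl _ _ _ Hx) (Gsum_Radr _ _ _ Hx) !addr0 (addrC (G (- i) y)).
    by move=> /addrI E; rewrite {1}E gpowKN.
  case: (eqVneq n 1%N) => [n1|/eqP n1].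
    by have [Gn _] := Hn (ltac:(by rewrite n1)); have := Gn x; rewrite n1.
  have := f_equal snd (Hcomm (1, 0) (normz1 n1)); rewrite !qmulE /=.
  rewrite (Gsum_Radl _ _ _ Hx) (Gsum_Radr _ _ _ Hx) (gpow_fix _ g0) !addr0 add0r.
  by move=> E; rewrite -{1}E gVK.
move=> [Hnuc Hg Hgx]; split=> // -[j y] _.
have [Hx _] := (nucleusP x Ci).1 Hnuc.
rewrite !qmulE (Gsum_Radl _ _ _ Hx) (Gsum_Radr _ _ _ Hx) !addr0 (addrC j).
have -> : G (- i) y = y by rewrite -{1}(Hg y) gpowNK.
by rewrite (gpow_fix _ Hgx) (addrC x).
Qed.

End CyclicOfOrderN.

End ConstructionPair.

Unset Implicit Arguments.

Theorem mainTheorem8 (X : zmodType) (g ginv : X -> X) (gamma : X -> X -> X)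
  (n : nat) :
  construction_pair g ginv gamma ->
  ((0 < n)%N ->
     (forall x, gpow g ginv n%:Z x = x) /\
     (exists r, is_r g ginv gamma r /\ (r %| n)%N)) ->
  forall (i : int) (x : X), canon n (i, x) ->
    (in_nucleus g ginv gamma n (i, x) <->
       Rad gamma x /\ (i = 0 \/ r_divides g ginv gamma i)) /\
    (in_center g ginv gamma n (i, x) <->
       [/\ in_nucleus g ginv gamma n (i, x),
           (forall y, gpow g ginv i y = y) & g x = x]).
Proof.
move=> HC Hn i x Ci.
by split; [exact: nucleusP | exact: centerP].
Qed.
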